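(* Fix $q\in[0,1)$. For $\varepsilon\in(0,1-q)$ let $\mathcal{I}_1(\varepsilon)$ be the instance of the online volunteer notification problem with $V=1$, $S=2$, $T=2$, $g(\tau)=q(1-q)^{\tau-1}$ for $\tau\in\mathbb{N}$, arrival probabilities $\lambda_{1,1}=1$, $\lambda_{2,2}=\frac{\varepsilon}{1-q}$ (all other $\lambda_{s,t}=0$), and match probabilities $p_{1,1}=\varepsilon$, $p_{1,2}=1$. Then for every $\delta>0$ there exists $\varepsilon_0>0$ such that for all $\varepsilon\in(0,\varepsilon_0)$, every online policy completes in expectation at most $\left(\frac{1}{2-q}+\delta\right)\mathbf{LP}_{\mathcal{I}_1(\varepsilon)}$ tasks.
   Context: Online volunteer notification problem. An instance $\mathcal{I}$ consists of volunteers $[V]$, task types $[S]$, horizon $T$, arrival probabilities $\lambda_{s,t}\ge0$ with $\sum_s\lambda_{s,t}\le1$, match probabilities $p_{v,s}\in[0,1]$, and a probability mass function $g$ on the positive integers with CDF $G(\tau)=\sum_{i\le\tau}g(i)$, $G(0)=0$. In each period $t$ at most one task arrives, of type $s$ with probability $\lambda_{s,t}$, independently across periods. All volunteers start active. Upon an arrival the platform immediately and irrevocably notifies a subset of volunteers; each notified active volunteer $v$ responds positively independently with probability $p_{v,s}$; the task is completed iff at least one does. A volunteer active and notified at time $t$ becomes inactive (regardless of response) and active again at $t+Z$, $Z\sim g$ independent; inactive volunteers ignore notifications. An online policy decides whom to notify using only information available up to the current period. $\mathbf{LP}_{\mathcal{I}}=\max\sum_{t,s}\lambda_{s,t}\min\{\sum_vx_{v,s,t}p_{v,s},1\}$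 subject to $0\le x_{v,s,t}\le1$ and $\sum_{\tau=1}^t\sum_s\lambda_{s,\tau}x_{v,s,\tau}(1-G(t-\tau))\le1$ for all $v,t$. *)

From HB Require Import structures.
From mathcomp Require Import all_boot all_order all_algebra.
From mathcomp Require Import reals.
Set Implicit Arguments. Unset Strict Implicit. Unset Printing Implicit Defensive.
Import Order.TTheory GRing.Theory Num.Theory.
Local Open Scope ring_scope.

(* ---------- General online volunteer notification model ----------
   Volunteers are 'I_V, task types are 'I_S (type s+1 of the paper is s),
   periods are natural numbers 1..T.
   lam s t : arrival prob. of type s in period t;  pm v s : match prob.;
   g : pmf of the inactivity duration Z on positive integers (g 0 = 0). *)

Definition Gcdf (R : realType) (g : nat -> R) (tau : nat) : R :=
  \sum_(1 <= i < tau.+1) g i.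

(* What the platform observes in one period:
   (arrived type or None, set of active volunteers, notified set,
    set of volunteers that responded positively). *)
Definition event (V S : nat) :=
  (option 'I_S * {set 'I_V} * {set 'I_V} * {set 'I_V})%type.

(* A (randomized, behavioural) online policy: given the observed history of
   past periods, the type of the current arrival and the current set of
   active volunteers, a probability distribution over the set to notify. *)
Definition policy (R : realType) (V S : nat) :=
  seq (event V S) -> 'I_S -> {set 'I_V} -> {ffun {set 'I_V} -> R}.

Definition valid_policy (R : realType) (V S : nat) (pi : policy R V S) : Prop :=
  forall h s act, (forall A, 0 <= pi h s act A) /\ \sum_(A : {set 'I_V}) pi h s act A = 1.

(* Expected number of completed tasks in periods t, ..., t+n-1, starting from
   state [ret] (volunteer v is active in period u iff ret v <= u) and
   observed history [h].  The inactivity duration Z of a volunteer notified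
   at t only matters through its value when Z <= n-1 (it becomes active again
   at t+Z within the horizon); the event Z >= n (probability 1 - G(n-1)) is
   encoded by the index 0 and sends the volunteer to ret = t+n (inactive for
   the rest of the horizon). *)
Fixpoint value (R : realType) (V S : nat) (lam : 'I_S -> nat -> R)
  (pm : 'I_V -> 'I_S -> R) (g : nat -> R) (pi : policy R V S)
  (n t : nat) (ret : 'I_V -> nat) (h : seq (event V S)) {struct n} : R :=
  match n with
  | 0 => 0
  | n'.+1 =>
    let act := [set v | (ret v <= t)%N] in
    (1 - \sum_s lam s t) *
      value lam pm g pi n' t.+1 ret (rcons h (None, act, set0, set0))
    + \sum_s lam s t * \sum_(A : {set 'I_V}) pi h s act A *
      \sum_(B : {set 'I_V} | B \subset A :&: act)
        (\prod_(v in A :&: act) (if v \in B then pm v s else 1 - pm v s)) *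
        ((B != set0)%:R +
         \sum_(f : {ffun 'I_V -> 'I_n'.+1})
           (\prod_v (if v \in A :&: act then
                       (if f v == ord0 then 1 - Gcdf g n' else g (f v))
                     else (f v == ord0)%:R)) *
           value lam pm g pi n' t.+1
             (fun v => if v \in A :&: act then
                         (if f v == ord0 then (t + n)%N else (t + f v)%N)
                       else ret v)
             (rcons h (Some s, act, A, B)))
  end.

Definition expected_completed (R : realType) (V S T : nat)
  (lam : 'I_S -> nat -> R) (pm : 'I_V -> 'I_S -> R) (g : nat -> R)
  (pi : policy R V S) : R :=
  value lam pm g pi T 1 (fun _ => 0%N) [::].

Definition lp_feasible (R : realType) (V S T : nat)
  (lam : 'I_S -> nat -> R) (g : nat -> R) (x : 'I_V -> 'I_S -> nat -> R) : Prop :=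
  (forall v s t, (1 <= t <= T)%N -> 0 <= x v s t <= 1) /\
  (forall v t, (1 <= t <= T)%N ->
     \sum_(1 <= tau < t.+1) \sum_s lam s tau * x v s tau * (1 - Gcdf g (t - tau))
       <= 1).

Definition lp_obj (R : realType) (V S T : nat)
  (lam : 'I_S -> nat -> R) (pm : 'I_V -> 'I_S -> R)
  (x : 'I_V -> 'I_S -> nat -> R) : R :=
  \sum_(1 <= t < T.+1) \sum_s lam s t * Num.min (\sum_v x v s t * pm v s) 1.

Definition LP (R : realType) (V S T : nat)
  (lam : 'I_S -> nat -> R) (pm : 'I_V -> 'I_S -> R) (g : nat -> R) : R :=
  sup (fun r : R => exists x : 'I_V -> 'I_S -> nat -> R,
                 lp_feasible T lam g x /\ r = lp_obj T lam pm x).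

Definition lam1 (R : realType) (q eps : R) (s : 'I_2) (t : nat) : R :=
  if (val s == 0%N) && (t == 1%N) then 1
  else if (val s == 1%N) && (t == 2%N) then eps / (1 - q)
  else 0.

Definition p1 (R : realType) (eps : R) (v : 'I_1) (s : 'I_2) : R :=
  if val s == 0%N then eps else 1.

Definition geom (R : realType) (q : R) (tau : nat) : R :=
  if tau == 0%N then 0 else q * (1 - q) ^+ tau.-1.

From mathcomp Require Import all_boot all_order all_algebra.
From mathcomp Require Import reals.
From mathcomp Require classical_sets.
From mathcomp Require Import ring lra.
Import Order.TTheory GRing.Theory Num.Theory.
Local Open Scope ring_scope.

(* With one volunteer and k = eps / (1 - q), an online policy facing the
   period-1 task either notifies, earning eps and keeping the volunteer for
   period 2 only with probability q, or waits and serves the period-2 task,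
   which arrives with probability k and always succeeds.  Since eps + q k = k
   every policy earns at most k.  The LP may split the volunteer: x = 1 - k in
   period 1 and x = 1 in period 2 is feasible with value
   (1 - k) eps + k = k (2 - q - eps), so the ratio is at most 1 / (2 - q - eps),
   within delta of 1 / (2 - q) as soon as eps < delta. *)

Lemma valueS (R : realType) (V S : nat) (lam : 'I_S -> nat -> R)
  (pm : 'I_V -> 'I_S -> R) (g : nat -> R) (pi : policy R V S)
  (n t : nat) (ret : 'I_V -> nat) (h : seq (event V S)) :
  let act := [set v | (ret v <= t)%N] in
  value lam pm g pi n.+1 t ret h =
    (1 - \sum_s lam s t) *
      value lam pm g pi n t.+1 ret (rcons h (None, act, set0, set0))
    + \sum_s lam s t * \sum_(A : {set 'I_V}) pi h s act A *
      \sum_(B : {set 'I_V} | B \subset A :&: act)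
        (\prod_(v in A :&: act) (if v \in B then pm v s else 1 - pm v s)) *
        ((B != set0)%:R +
         \sum_(f : {ffun 'I_V -> 'I_n.+1})
           (\prod_v (if v \in A :&: act then
                       (if f v == ord0 then 1 - Gcdf g n else g (f v))
                     else (f v == ord0)%:R)) *
           value lam pm g pi n t.+1
             (fun v => if v \in A :&: act then
                         (if f v == ord0 then (t + n.+1)%N else (t + f v)%N)
                       else ret v)
             (rcons h (Some s, act, A, B))).
Proof. by []. Qed.

Lemma value1E (R : realType) (V S : nat) (lam : 'I_S -> nat -> R)
  (pm : 'I_V -> 'I_S -> R) (g : nat -> R) (pi : policy R V S)
  (t : nat) (ret : 'I_V -> nat) (h : seq (event V S)) :
  let act := [set v | (ret v <= t)%N] in
  value lam pm g pi 1 t ret h =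
    \sum_s lam s t * \sum_(A : {set 'I_V}) pi h s act A *
      \sum_(B : {set 'I_V} | B \subset A :&: act)
        (\prod_(v in A :&: act) (if v \in B then pm v s else 1 - pm v s)) *
        (B != set0)%:R.
Proof.
rewrite /= mulr0 add0r; apply: eq_bigr => s _; congr (_ * _).
apply: eq_bigr => A _; congr (_ * _); apply: eq_bigr => B _; congr (_ * _).
by rewrite big1 ?addr0 // => f _; rewrite mulr0.
Qed.

Arguments value : simpl never.

Lemma policy_mean_le (R : realType) (V S : nat) (pi : policy R V S)
    h s act (F : {set 'I_V} -> R) (M : R) :
  valid_policy pi -> (forall A, F A <= M) -> \sum_A pi h s act A * F A <= M.
Proof.
case/(_ h s act) => pi_ge0 pi_sum1 F_le.
apply: le_trans (_ : \sum_A pi h s act A * M <= M); last first.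
  by rewrite -mulr_suml pi_sum1 mul1r.
by apply: ler_sum => A _; apply: ler_wpM2l.
Qed.

Lemma set_ord1 (A : {set 'I_1}) : A = set0 \/ A = setT.
Proof.
case: (boolP (ord0 \in A)) => A0; [right | left]; apply/setP => i.
  by rewrite !inE ord1.
by rewrite !inE ord1 (negbTE A0).
Qed.

Lemma setT_ord1_neq0 : [set: 'I_1] != set0.
Proof. by apply/eqP => /setP /(_ ord0); rewrite !inE. Qed.

Lemma big_set_ord1 (M : nmodType) (F : {set 'I_1} -> M) :
  \sum_(A : {set 'I_1}) F A = F set0 + F setT.
Proof.
rewrite (bigD1 set0) //= (bigD1 setT) ?setT_ord1_neq0 //=.
rewrite big_pred0 ?addr0 // => A; apply/negbTE; rewrite negb_and !negbK.
by case: (set_ord1 A) => ->; rewrite eqxx ?orbT.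
Qed.

Lemma big_ffun_ord1 (M : nmodType) (T : finType) (F : {ffun 'I_1 -> T} -> M) :
  \sum_f F f = \sum_(x : T) F [ffun => x].
Proof.
rewrite (reindex (fun x : T => [ffun => x])) //.
exists (fun f : {ffun 'I_1 -> T} => f ord0) => [x _ | f _].
  by rewrite ffunE.
by apply/ffunP => i; rewrite ffunE (ord1 i).
Qed.

Lemma big_ord2 (M : nmodType) (F : 'I_2 -> M) :
  \sum_(i < 2) F i = F ord0 + F ord_max.
Proof. by rewrite big_ord_recl big_ord1; congr (_ + F _); apply: val_inj. Qed.

Lemma Gcdf0 (R : realType) (g : nat -> R) : Gcdf g 0 = 0.
Proof. by rewrite /Gcdf big_geq. Qed.

Section Instance.

Context {R : realType} (q eps : R).
Hypotheses (q_ge0 : 0 <= q) (q_lt1 : q < 1).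
Hypotheses (eps_gt0 : 0 < eps) (eps_lt : eps < 1 - q).

Local Notation k := (eps / (1 - q)).
Local Notation valueI := (value (lam1 q eps) (p1 eps) (geom q)).

Lemma subq_gt0 : 0 < 1 - q. Proof. by rewrite subr_gt0. Qed.

Lemma k_ge0 : 0 <= k.
Proof. by rewrite divr_ge0 ?ltW ?subq_gt0. Qed.

Lemma k_lt1 : k < 1.
Proof. by rewrite ltr_pdivrMr ?subq_gt0 // mul1r. Qed.

Lemma k_mul_subq : k * (1 - q) = eps.
Proof. by rewrite mulfVK // gt_eqF ?subq_gt0. Qed.

Lemma eps_le1 : eps <= 1.
Proof. by rewrite ltW // (lt_le_trans eps_lt) ?gerBl. Qed.

Lemma geom1 : geom q 1 = q.
Proof. by rewrite /geom /= expr0 mulr1. Qed.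

Lemma Gcdf_geom1 : Gcdf (geom q) 1 = q.
Proof. by rewrite /Gcdf big_nat1 geom1. Qed.

(* The payoff of notifying at t = 1: [x_i] are continuation values with the
   volunteer gone for period 2 (probability 1 - q), [y_i] with him back. *)
Lemma notify_payoff_le (x0 y0 x1 y1 : R) :
  x0 <= 0 -> y0 <= k -> x1 <= 0 -> y1 <= k ->
  (1 - eps) * ((1 - q) * x0 + q * y0) + eps * (1 + ((1 - q) * x1 + q * y1)) <= k.
Proof.
move=> x0_le0 y0_le x1_le0 y1_le.
have next_le (x y : R) : x <= 0 -> y <= k -> (1 - q) * x + q * y <= q * k.
  move=> x_le0 y_le; rewrite -[q * k]add0r lerD ?ler_wpM2l //.
  by rewrite mulr_ge0_le0 // ltW ?subq_gt0.
have k_eq := k_mul_subq; set c := eps / (1 - q) in k_eq y0_le y1_le next_le *.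
suff <- : (1 - eps) * (q * c) + eps * (1 + q * c) = c.
  apply: lerD; apply: ler_wpM2l; rewrite ?subr_ge0 ?eps_le1 ?lerD2l ?next_le //.
  exact: ltW.
by rewrite -k_eq; ring.
Qed.

Lemma value_last pi ret h : valid_policy pi ->
  valueI pi 1 2 ret h <= (ret ord0 <= 2)%N%:R * k.
Proof.
move=> pi_valid; rewrite value1E big_ord_recl big_ord1 /=.
rewrite ![lam1 _ _ _ _]/lam1 /= mul0r add0r mulrC ler_wpM2r ?k_ge0 //.
apply: policy_mean_le => // A.
rewrite big_mkcond big_set_ord1 /= sub0set eqxx mulr0 add0r.
case: ifP => [/subsetP/(_ ord0) | _]; last by rewrite ler0n.
rewrite !inE => /(_ isT) /andP[_ ->]; rewrite setT_ord1_neq0 mulr1.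
by rewrite big1 // => v _; rewrite inE.
Qed.

Lemma expected_completed_le pi : valid_policy pi ->
  expected_completed 2 (lam1 q eps) (p1 eps) (geom q) pi <= k.
Proof.
move=> pi_valid; rewrite /expected_completed.
have last_le ret h : valueI pi 1 2 ret h <= k.
  apply: le_trans (value_last pi ret h pi_valid) _.
  by rewrite ler_piMl ?k_ge0 // lern1 leq_b1.
have last_inactive ret h : (2 < ret ord0)%N -> valueI pi 1 2 ret h <= 0.
  move=> ret_gt2; apply: le_trans (value_last pi ret h pi_valid) _.
  by rewrite leqNgt ret_gt2 mul0r.
rewrite valueS !big_ord_recl !big_ord0 ![lam1 _ _ _ _]/lam1 /=.
rewrite !addr0 subrr !mul0r add0r mul1r addr0.
have -> : [set _ | (0 <= 1)%N] = [set: 'I_1] by apply/setP => v; rewrite !inE.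
apply: policy_mean_le => // A; rewrite setIT.
case: (set_ord1 A) => ->; rewrite big_mkcond big_set_ord1 /= sub0set.
  rewrite subset0 (negbTE setT_ord1_neq0) big_set0 eqxx mul1r addr0 add0r.
  rewrite big_ffun_ord1 big_ord2 !big_ord1 !ffunE !in_set0 /=.
  by rewrite mul1r mul0r addr0 last_le.
rewrite subxx setT_ord1_neq0 eqxx add0r.
rewrite !big_ffun_ord1 !big_ord2 !big_mkcond !big_ord1.
rewrite !ffunE !in_setT ?in_set0 /=.
rewrite big_mkcond big_ord1 !in_setT /= ![p1 _ _ _]/p1 /= Gcdf_geom1 geom1.
by apply: notify_payoff_le; rewrite ?last_le ?last_inactive //= in_setT ffunE.
Qed.

Definition lp_witness : 'I_1 -> 'I_2 -> nat -> R :=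
  fun _ s _ => if val s == 0%N then 1 - k else 1.

Lemma lp_obj_instance x : lp_obj 2 (lam1 q eps) (p1 eps) x =
  Num.min (x ord0 ord0 1%N * eps) 1 + k * Num.min (x ord0 ord_max 2%N) 1.
Proof.
rewrite /lp_obj big_nat_recr //= big_nat1 !big_ord2 ![lam1 _ _ _ _]/lam1 /=.
by rewrite !big_ord1 ![p1 _ _ _]/p1 /= !mul0r mul1r !addr0 add0r mulr1.
Qed.

Lemma lp_witness_feasible : lp_feasible 2 (lam1 q eps) (geom q) lp_witness.
Proof.
split=> [v s t _ | v [|[|[|t]]] //= _].
- rewrite /lp_witness; case: ifP => _; last by rewrite ler01 lexx.
  by rewrite subr_ge0 gerBl k_ge0 ltW ?k_lt1.
- rewrite big_nat1 big_ord2 ![lam1 _ _ _ _]/lam1 /lp_witness /= subnn Gcdf0.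
  by rewrite !mul0r addr0 mul1r subr0 mulr1 gerBl k_ge0.
- rewrite big_nat_recr //= big_nat1 !big_ord2 ![lam1 _ _ _ _]/lam1 /lp_witness /=.
  rewrite subnn Gcdf0 (_ : (2 - 1)%N = 1%N) // Gcdf_geom1 !mul0r !add0r ?addr0.
  rewrite mul1r subr0 !mulr1 -lerBrDr.
  by apply: ler_piMr; rewrite ?gerBl // subr_ge0 ltW ?k_lt1.
Qed.

Lemma lp_obj_witness :
  lp_obj 2 (lam1 q eps) (p1 eps) lp_witness = k * (2 - q - eps).
Proof.
rewrite lp_obj_instance /lp_witness /= min_l ?min_l ?mulr1 //.
  by have k_eq := k_mul_subq; set c := k in k_eq *; rewrite -k_eq; ring.
by rewrite mulr_ile1 ?subr_ge0 ?gerBl ?k_ge0 ?eps_le1 // ltW ?k_lt1.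
Qed.

Lemma LP_ge : k * (2 - q - eps) <= LP 2 (lam1 q eps) (p1 eps) (geom q).
Proof.
pose E (r : R) : Prop := exists x : 'I_1 -> 'I_2 -> nat -> R,
  lp_feasible 2 (lam1 q eps) (geom q) x /\ r = lp_obj 2 (lam1 q eps) (p1 eps) x.
have E_witness : E (k * (2 - q - eps)).
  exists lp_witness; rewrite lp_obj_witness.
  by split=> //; exact: lp_witness_feasible.
have E_sup : classical_sets.has_sup E.
  split; first by exists (k * (2 - q - eps)).
  exists (1 + k) => _ [x [_ ->]]; rewrite lp_obj_instance.
  by rewrite lerD ?ge_min ?lexx ?orbT // ler_piMr ?k_ge0 // ge_min lexx orbT.
exact: sup_upper_bound E_sup _ E_witness.
Qed.

End Instance.

Lemma ratio_slack {R : realFieldType} (q eps delta : R) :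
  0 <= q -> 0 <= eps -> eps <= delta -> eps < 1 - q ->
  1 <= (1 / (2 - q) + delta) * (2 - q - eps).
Proof.
move=> q_ge0 eps_ge0 eps_le eps_lt.
set d := 1 / (2 - q).
have d_mul : d * (2 - q) = 1 by rewrite /d mul1r mulVf // gt_eqF //; lra.
have d_le1 : d <= 1 by rewrite /d ler_pdivrMr ?mul1r; lra.
have := ler_piMl eps_ge0 d_le1.
have : 0 <= delta * (1 - q - eps) by rewrite mulr_ge0 //; lra.
lra.
Qed.

Theorem lemma4 (R : realType) (q : R) (hq : 0 <= q < 1) :
  forall delta : R, 0 < delta ->
  exists eps0 : R, 0 < eps0 /\
    forall eps : R, 0 < eps -> eps < eps0 -> eps < 1 - q ->
    forall pi : policy R 1 2, valid_policy pi ->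
      expected_completed 2 (lam1 q eps) (p1 eps) (geom q) pi
      <= (1 / (2 - q) + delta) * LP 2 (lam1 q eps) (p1 eps) (geom q).
Proof.
move=> delta delta_gt0; exists delta; split=> // eps eps_gt0 eps_lt_delta.
move=> eps_lt pi pi_valid.
case/andP: hq => q_ge0 q_lt1.
have k_ge0 := k_ge0 _ _ q_lt1 eps_gt0.
have slack : 1 <= (1 / (2 - q) + delta) * (2 - q - eps).
  by apply: ratio_slack => //; apply: ltW.
have online_le := expected_completed_le _ _ q_ge0 q_lt1 eps_gt0 eps_lt _ pi_valid.
apply: le_trans online_le _.
apply: le_trans (ler_peMr k_ge0 slack) _.
rewrite mulrCA ler_wpM2l ?(LP_ge _ _ q_ge0 q_lt1 eps_gt0 eps_lt) //.
have ratio_gt0 : 0 < 1 / (2 - q).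
  by rewrite divr_gt0 // subr_gt0 (lt_trans q_lt1) ?ltr1n.
by rewrite addr_ge0 // ltW.
Qed.
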